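(* Let $G$, $k\ge 3$, the choice strings $c_{i,j}$ ($1\le i<j\le k$), the template string $t$, $L$ and $d$ be as in the binary construction described in the context. If $G$ has a clique of size $k$, then there is a string $s\in\{0,1\}^L$ such that every choice string $c_{i,j}$ has a substring $s_{i,j}$ of length $L$ with $d_H(s,s_{i,j})\le d$, and $d_H(s,t)\le d$.
   Context: Let $G=(V,E)$ be an undirected simple graph with $V=\{v_1,\dots,v_n\}$ and edge set $E=\{e_1,\dots,e_m\}$, and let $k\ge 3$ be an integer; put $N=\binom{k}{2}$ and $b=nk-2k+2$. All strings are over $\{0,1\}$. For $1\le p\le n$ let $\mathrm{number}(p)=0^{p-1}10^{n-p}$. Let $\mathrm{front\_tag}=(1^{3nk}0)^{nk}$ (length $(3nk+1)nk$). Order the pairs $(i,j)$, $1\le i<j\le k$, lexicographically and let $i'$ be the position of $(i,j)$ in this order. For an edge $e$ joining $v_r,v_s$ with $r<s$ let $\mathrm{encode}(i,j,e)=(0^n)^{i-1}\,\mathrm{number}(r)\,(0^n)^{j-i-1}\,\mathrm{number}(s)\,(0^n)^{k-j}$ (length $nk$; its $k$ consecutive length-$n$ pieces are called sections), $\mathrm{back\_tag}(i')=0^{(i'-1)b}1^{b}0^{(N-i')b}$, and $\mathrm{block}(i,j,e)=\mathrm{front\_tag}\,\mathrm{encode}(i,j,e)\,\mathrm{back\_tag}(i')$. The choice string is $c_{i,j}=\mathrm{block}(i,j,e_1)\mathrm{block}(i,j,e_2)\cdots\mathrm{block}(i,j,e_m)$. The template string is $t=\mathrm{front\_tag}\,1^{nk}\,0^{Nb}$.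 Set $L=(3nk+1)nk+nk+Nb$ and $d=nk-k$. $d_H$ denotes Hamming distance. *)

From mathcomp Require Import all_boot.
Set Implicit Arguments. Unset Strict Implicit. Unset Printing Implicit Defensive.

Definition simple_graph (n : nat) (E : seq (nat * nat)) : Prop :=
  uniq E /\ all (fun e => (0 < e.1) && (e.1 < e.2) && (e.2 <= n)) E.

Definition adjacent (E : seq (nat * nat)) (u v : nat) : bool :=
  ((u, v) \in E) || ((v, u) \in E).

Definition has_clique (n k : nat) (E : seq (nat * nat)) : Prop :=
  exists Q : seq nat, [/\ size Q = k, uniq Q,
    all (fun v => (0 < v) && (v <= n)) Q &
    forall u v, u \in Q -> v \in Q -> u != v -> adjacent E u v].

Section Construction.
Variables (n k : nat) (E : seq (nat * nat)).

Definition NN : nat := 'C(k, 2).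
Definition bb : nat := n * k - 2 * k + 2.

Definition number (p : nat) : seq bool :=
  nseq (p - 1) false ++ [:: true] ++ nseq (n - p) false.

Definition front_tag : seq bool :=
  flatten (nseq (n * k) (nseq (3 * n * k) true ++ [:: false])).

Definition pairs_lex : seq (nat * nat) :=
  [seq ij <- [seq (i, j) | i <- iota 1 k, j <- iota 1 k] | ij.1 < ij.2].

(* 1-based position i' of (i,j) in this order *)
Definition pair_pos (i j : nat) : nat := (index (i, j) pairs_lex).+1.

Definition zsec (c : nat) : seq bool := nseq (c * n) false.

Definition encode (i j : nat) (e : nat * nat) : seq bool :=
  zsec (i - 1) ++ number e.1 ++ zsec (j - i - 1) ++ number e.2 ++ zsec (k - j).

Definition back_tag (i' : nat) : seq bool :=
  nseq ((i' - 1) * bb) false ++ nseq bb true ++ nseq ((NN - i') * bb) false.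

Definition block (i j : nat) (e : nat * nat) : seq bool :=
  front_tag ++ encode i j e ++ back_tag (pair_pos i j).

Definition choice_string (i j : nat) : seq bool :=
  flatten [seq block i j e | e <- E].

Definition template : seq bool :=
  front_tag ++ nseq (n * k) true ++ nseq (NN * bb) false.

Definition LL : nat := (3 * n * k + 1) * (n * k) + n * k + NN * bb.
Definition dd : nat := n * k - k.

End Construction.

Definition dH (s t : seq bool) : nat := count (fun p => p.1 != p.2) (zip s t).

Definition substring (x : seq bool) (p l : nat) : seq bool := take l (drop p x).

From Pilot Require Import Defs.
From mathcomp Require Import all_boot zify.

Set Implicit Arguments.
Unset Strict Implicit.
Unset Printing Implicit Defensive.

(* Let v_1 < ... < v_k be the clique and take s = front_tag, then
   number(v_1) ... number(v_k), then N b zeros.  Against the template, s only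
   differs on the n k - k zeros of its middle part.  Against the block of
   c_{i,j} for the edge v_i v_j the front tags agree, the middle parts differ
   exactly on the k - 2 ones of the sections other than i and j, and the back
   tag adds its b ones: (k - 2) + (n k - 2 k + 2) = n k - k. *)

Lemma dH_cat s1 s2 t1 t2 :
  size s1 = size t1 -> dH (s1 ++ s2) (t1 ++ t2) = dH s1 t1 + dH s2 t2.
Proof. by move=> eq_sz; rewrite /dH zip_cat // count_cat. Qed.

Lemma dH_xx s : dH s s = 0.
Proof. by elim: s => //= x s; rewrite /dH /= eqxx. Qed.

Lemma dHC s t : dH s t = dH t s.
Proof.
elim: s t => [|x s IHs] [|y t] //.
by rewrite /dH /= eq_sym -!/(dH _ _) IHs.
Qed.

Lemma dH_nseq_false s : dH s (nseq (size s) false) = count id s.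
Proof. by elim: s => //= b s; rewrite /dH /= => ->; case: b. Qed.

Lemma dH_nseq_true s : dH s (nseq (size s) true) = size s - count id s.
Proof.
suff -> : dH s (nseq (size s) true) = count (predC id) s.
  by rewrite -(count_predC id s) addKn.
by elim: s => //= b s; rewrite /dH /= => ->; case: b.
Qed.

Lemma size_flatten_uniform (S : eqType) (T : Type) (f : S -> seq T) B s :
  {in s, forall x, size (f x) = B} -> size (flatten (map f s)) = size s * B.
Proof.
elim: s => //= y s IHs size_f.
rewrite size_cat size_f ?mem_head // IHs // => x xs.
by rewrite size_f // inE xs orbT.
Qed.

Lemma substring_flatten_uniform (S : eqType) (f : S -> seq bool) B s x :
  {in s, forall y, size (f y) = B} -> x \in s ->
  substring (flatten (map f s)) (index x s * B) B = f x.
Proof.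
rewrite /substring; elim: s => //= y s IHs size_f.
have [<- _|ne_yx] := eqVneq y x.
  by rewrite drop0 take_size_cat ?size_f ?mem_head.
rewrite inE eq_sym (negPf ne_yx) /= => xs.
rewrite mulSn addnC -drop_drop drop_size_cat ?size_f ?mem_head // IHs // => z zs.
by rewrite size_f // inE zs orbT.
Qed.

Lemma cat_take_nth2 (T : Type) (x0 : T) s i j : i < j < size s ->
  s = take i s ++ nth x0 s i ::
        take (j - i.+1) (drop i.+1 s) ++ nth x0 s j :: drop j.+1 s.
Proof.
move=> /andP[lt_ij lt_js].
rewrite -[LHS](cat_take_drop i) (drop_nth x0) 1?(ltn_trans lt_ij) //.
congr (_ ++ _ :: _).
by rewrite -[LHS](cat_take_drop (j - i.+1)) drop_drop subnK // [drop j s](drop_nth x0).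
Qed.

(* [Defs.number] is qualified because plain [number] is the Corelib type of numerals. *)
Definition vertex_code (n : nat) (X : seq nat) : seq bool :=
  flatten [seq Defs.number n v | v <- X].

Notation in_range n := (fun v => (0 < v) && (v <= n)).

Lemma size_number n v : 0 < v <= n -> size (Defs.number n v) = n.
Proof. by move=> v_in; rewrite /number !size_cat !size_nseq /=; lia. Qed.

Lemma count_number n v : count id (Defs.number n v) = 1.
Proof. by rewrite /number !count_cat !count_nseq /= mul0n addn0. Qed.

Lemma vertex_code_cat n X Y :
  vertex_code n (X ++ Y) = vertex_code n X ++ vertex_code n Y.
Proof. by rewrite /vertex_code map_cat flatten_cat. Qed.

Lemma vertex_code_cons n v X :
  vertex_code n (v :: X) = Defs.number n v ++ vertex_code n X.
Proof. by []. Qed.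

Lemma size_vertex_code n X :
  all (in_range n) X -> size (vertex_code n X) = size X * n.
Proof. by move=> /allP X_in; apply: size_flatten_uniform => v /X_in /size_number. Qed.

Lemma count_vertex_code n X : count id (vertex_code n X) = size X.
Proof.
rewrite /vertex_code count_flatten -map_comp.
by elim: X => //= v X ->; rewrite count_number.
Qed.

Lemma dH_vertex_code_zsec n X :
  all (in_range n) X -> dH (vertex_code n X) (zsec n (size X)) = size X.
Proof.
by move=> X_in; rewrite /zsec -size_vertex_code // dH_nseq_false count_vertex_code.
Qed.

Lemma dH_vertex_code_encode n k Q i j :
  size Q = k -> all (in_range n) Q -> 1 <= i -> i < j -> j <= k ->
  dH (vertex_code n Q) (encode n k i j (nth 0 Q i.-1, nth 0 Q j.-1)) = k - 2.
Proof.
move=> size_Q Q_in i_gt0 lt_ij le_jk.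
have Qij : i.-1 < j.-1 < size Q by apply/andP; lia.
have Q_eq := cat_take_nth2 0 Qij.
set vi := nth 0 Q _ in Q_eq *; set vj := nth 0 Q _ in Q_eq *.
set Q1 := take _ Q in Q_eq; set Q2 := take _ _ in Q_eq; set Q3 := drop _ Q in Q_eq.
have size_Q1 : size Q1 = i - 1 by rewrite size_takel; lia.
have size_Q2 : size Q2 = j - i - 1 by rewrite size_takel ?size_drop; lia.
have size_Q3 : size Q3 = k - j by rewrite size_drop; lia.
move: Q_in; rewrite Q_eq /encode /= all_cat /= all_cat /=.
move=> /and5P[Q1_in vi_in Q2_in vj_in Q3_in].
rewrite !(vertex_code_cat, vertex_code_cons) -size_Q1 -size_Q2 -size_Q3.
rewrite !dH_cat ?size_vertex_code ?size_number ?size_nseq // !dH_xx.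
rewrite !dH_vertex_code_zsec //; lia.
Qed.

Lemma size_pairs_lex k : size (pairs_lex k) = NN k.
Proof.
have count_gtn i : count (fun j => i < j) (iota 1 k) = k - i.
  by elim: k => // k IHk; rewrite -[k.+1]addn1 iotaD count_cat IHk /=; lia.
rewrite /pairs_lex /NN size_filter count_flatten -map_comp sumnE big_map.
under eq_bigr => i _ do rewrite /= count_map [count _ _]count_gtn.
have -> : iota 1 k = index_iota 1 k.+1 by rewrite /index_iota subn1.
rewrite -bin2_sum big_nat_rev big_add1 /=.
by apply: eq_big_nat => i /andP[_ lt_ik]; lia.
Qed.

Lemma pair_pos_le k i j : 1 <= i -> i < j -> j <= k -> pair_pos k i j <= NN k.
Proof.
move=> i_gt0 lt_ij le_jk.
rewrite /pair_pos -size_pairs_lex index_mem mem_filter /= lt_ij.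
by apply/allpairsP; exists (i, j); rewrite !mem_iota; split => //=; lia.
Qed.

Lemma size_front_tag n k : size (front_tag n k) = (3 * n * k + 1) * (n * k).
Proof.
rewrite /front_tag [RHS]mulnC; elim: (n * k) => //= m IHm.
by rewrite size_cat IHm size_cat size_nseq addn1.
Qed.

Lemma size_encode n k i j e : 1 <= i -> i < j -> j <= k ->
  0 < e.1 <= n -> 0 < e.2 <= n -> size (encode n k i j e) = n * k.
Proof.
move=> i_gt0 lt_ij le_jk e1_in e2_in.
rewrite /encode /zsec !size_cat !size_nseq /=; nia.
Qed.

Lemma size_back_tag n k i' : 0 < i' <= NN k -> size (back_tag n k i') = NN k * bb n k.
Proof.
move=> i'_in; rewrite /back_tag !size_cat !size_nseq -mulSn -mulnDl.
by congr (_ * _); lia.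
Qed.

Lemma count_back_tag n k i' : count id (back_tag n k i') = bb n k.
Proof. by rewrite /back_tag !count_cat !count_nseq /= mul0n add0n addn0 mul1n. Qed.

Lemma size_block n k i j e : 1 <= i -> i < j -> j <= k ->
  0 < e.1 <= n -> 0 < e.2 <= n -> size (block n k i j e) = LL n k.
Proof.
move=> i_gt0 lt_ij le_jk e1_in e2_in.
rewrite /block 2!size_cat size_front_tag size_encode // size_back_tag ?pair_pos_le //.
by rewrite /LL addnA.
Qed.

Lemma clique_size_le n k E : has_clique n k E -> k <= n.
Proof.
case=> Q [<- uniq_Q Q_in _]; rewrite -[n](size_iota 1).
by apply: uniq_leq_size => // v /(allP Q_in) v_in; rewrite mem_iota; lia.
Qed.

Lemma sorted_clique n k E : simple_graph n E -> has_clique n k E ->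
  exists Q, [/\ size Q = k, all (in_range n) Q &
    forall a b, a < b < k -> (nth 0 Q a, nth 0 Q b) \in E].
Proof.
move=> [_ /allP E_ok] [Q [size_Q uniq_Q Q_in adj_Q]].
exists (sort leq Q); split; rewrite ?size_sort ?all_sort // => a b /andP[lt_ab lt_bk].
have sorted_Q : sorted ltn (sort leq Q).
  by rewrite ltn_sorted_uniq_leq sort_uniq uniq_Q (sort_sorted leq_total).
have nth_in c : c < k -> nth 0 (sort leq Q) c \in Q.
  by move=> lt_ck; rewrite -(mem_sort leq) mem_nth // size_sort size_Q.
set u := nth 0 _ a; set v := nth 0 _ b.
have lt_uv : u < v.
  by apply: (sorted_ltn_nth ltn_trans) => //;
    rewrite inE size_sort size_Q // (ltn_trans lt_ab).
have ne_uv : u != v by rewrite ltn_eqF.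
have := adj_Q u v (nth_in _ (ltn_trans lt_ab lt_bk)) (nth_in _ lt_bk) ne_uv.
by case/orP=> [//|/E_ok /= vu_ok]; lia.
Qed.

Lemma choice_string_substring n k E i j e :
  simple_graph n E -> 1 <= i -> i < j -> j <= k -> e \in E ->
  exists2 p, p + LL n k <= size (choice_string n k E i j) &
    substring (choice_string n k E i j) p (LL n k) = block n k i j e.
Proof.
move=> [_ /allP E_ok] i_gt0 lt_ij le_jk eE.
have size_blocks : {in E, forall e, size (block n k i j e) = LL n k}.
  by move=> [a c] /E_ok /= ac_ok; apply: size_block => //=; lia.
exists (index e E * LL n k); last exact: substring_flatten_uniform.
rewrite /choice_string (size_flatten_uniform size_blocks) -mulSnr leq_mul2r.
by rewrite index_mem eE orbT.
Qed.

Definition clique_string n k (Q : seq nat) : seq bool :=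
  front_tag n k ++ vertex_code n Q ++ nseq (NN k * bb n k) false.

Lemma size_clique_string n k Q :
  size Q = k -> all (in_range n) Q -> size (clique_string n k Q) = LL n k.
Proof.
move=> size_Q Q_in; rewrite /clique_string !size_cat size_front_tag.
by rewrite size_vertex_code // size_nseq size_Q /LL addnA [k * n]mulnC.
Qed.

Lemma dH_clique_string_template n k Q :
  size Q = k -> all (in_range n) Q -> dH (clique_string n k Q) (template n k) = dd n k.
Proof.
move=> size_Q Q_in.
have size_code : size (vertex_code n Q) = n * k.
  by rewrite size_vertex_code // size_Q mulnC.
rewrite /clique_string /template dH_cat // dH_xx dH_cat ?size_nseq // dH_xx.
rewrite -[in nseq _ true]size_code dH_nseq_true count_vertex_code.
by rewrite size_code size_Q addn0.
Qed.

Lemma dH_clique_string_block n k Q i j :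
  size Q = k -> all (in_range n) Q -> 1 <= i -> i < j -> j <= k -> k <= n ->
  dH (clique_string n k Q) (block n k i j (nth 0 Q i.-1, nth 0 Q j.-1)) = dd n k.
Proof.
move=> size_Q Q_in i_gt0 lt_ij le_jk le_kn.
have nth_in a : a < k -> 0 < nth 0 Q a <= n.
  by move=> lt_ak; apply/(allP Q_in)/mem_nth; rewrite size_Q.
have size_code :
    size (vertex_code n Q) = size (encode n k i j (nth 0 Q i.-1, nth 0 Q j.-1)).
  by rewrite size_vertex_code // size_encode ?nth_in ?size_Q ?[k * n]mulnC //; lia.
rewrite /clique_string /block dH_cat // dH_xx dH_cat // dH_vertex_code_encode //.
rewrite dHC -(@size_back_tag n k (pair_pos k i j)) ?pair_pos_le //.
rewrite dH_nseq_false count_back_tag /dd /bb; nia.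
Qed.

Theorem proposition3 (n k : nat) (E : seq (nat * nat)) :
  simple_graph n E -> 3 <= k ->
  has_clique n k E ->
  exists s : seq bool,
    [/\ size s = LL n k,
        (forall i j, 1 <= i -> i < j -> j <= k ->
           exists p, p + LL n k <= size (choice_string n k E i j) /\
             dH s (substring (choice_string n k E i j) p (LL n k)) <= dd n k) &
        dH s (template n k) <= dd n k].
Proof.
move=> simple_E _ clique_E.
have le_kn := clique_size_le clique_E.
have [Q [size_Q Q_in QE]] := sorted_clique simple_E clique_E.
exists (clique_string n k Q); split.
- exact: size_clique_string.
- move=> i j i_gt0 lt_ij le_jk.
  have eE : (nth 0 Q i.-1, nth 0 Q j.-1) \in E by apply: QE; lia.
  have [p le_p sub_p] := choice_string_substring simple_E i_gt0 lt_ij le_jk eE.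
  by exists p; rewrite sub_p dH_clique_string_block.
- by rewrite dH_clique_string_template.
Qed.
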